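(* Let $A_1, A_2, A_3, \dots$ be independent and identically distributed real random variables, each with Gaussian distribution $\mathcal{N}(\mu,\sigma^2)$, $\sigma>0$. For $k\ge 2$ let $\mathbf A^{(k)}=(A_1,\dots,A_k)\in\mathbb R^k$ and $$S_k=\operatorname{softmax}_k(\mathbf A^{(k)})_1=\frac{e^{A_1}}{\sum_{j=1}^k e^{A_j}}.$$ For a threshold $\tau\in\mathbb R$ consider the binarized variable $\hat B_k(\tau)=\operatorname{sign}(S_k-\tau)\in\{-1,1\}$, and let $\tau_k$ be the threshold that maximizes the Shannon entropy $\mathcal H(\hat B_k(\tau))$ over $\tau\in\mathbb R$ (equivalently, the value with $P(S_k\le \tau_k)=\tfrac12$). Then the entropy-maximizing threshold is negatively correlated with the number of elements $k$: $\tau_{k+1}<\tau_k$ for every $k\ge 2$.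
   Context: $\operatorname{sign}(x)=1$ if $x\ge 0$ and $-1$ otherwise. The Shannon entropy of a random variable $B$ taking values in $\{-1,1\}$ is $\mathcal H(B)=-\sum_{b\in\{-1,1\}}p(b)\log p(b)$. *)

From HB Require Import structures.
From mathcomp Require Import all_boot all_order all_algebra.
From mathcomp Require Import all_classical all_reals all_analysis.
Set Implicit Arguments. Unset Strict Implicit. Unset Printing Implicit Defensive.
Import Order.TTheory GRing.Theory Num.Theory.
Import numFieldNormedType.Exports.
Local Open Scope classical_set_scope.
Local Open Scope ring_scope.

Definition sgn {R : realType} (x : R) : R := if 0 <= x then 1 else -1.

Definition plogp {R : realType} (p : R) : R := if p == 0 then 0 else p * ln p.

Definition entropy_pm1 d (T : measurableType d) (R : realType)
  (P : probability T R) (B : T -> R) : R :=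
  - \sum_(b <- [:: -1; 1]) plogp (fine (P (B @^-1` [set b]))).

Definition mutually_independent d (T : measurableType d) (R : realType)
  (P : probability T R) (A : nat -> {RV P >-> R}) : Prop :=
  forall (s : seq nat) (B : nat -> set R), uniq s ->
    (forall i, i \in s -> measurable (B i)) ->
    P (\bigcap_(i in [set j | j \in s]) (A i @^-1` B i)) =
    (\prod_(i <- s) P (A i @^-1` B i))%E.

(* Indexing is 0-based: A 0, ..., A (k-1) stand for A_1, ..., A_k.
   S_k = softmax_k(A_1..A_k)_1 = e^{A_1} / sum_{j=1}^k e^{A_j}. *)
Definition softmax1 d (T : measurableType d) (R : realType)
  (P : probability T R) (A : nat -> {RV P >-> R}) (k : nat) (x : T) : R :=
  expR (A 0%N x) / \sum_(j < k) expR (A j x).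

Definition Bhat d (T : measurableType d) (R : realType)
  (P : probability T R) (A : nat -> {RV P >-> R}) (k : nat) (tau : R) : T -> R :=
  fun x => sgn (softmax1 A k x - tau).

Definition entropy_max_threshold d (T : measurableType d) (R : realType)
  (P : probability T R) (A : nat -> {RV P >-> R}) (k : nat) (tau : R) : Prop :=
  forall t : R, entropy_pm1 P (Bhat A k t) <= entropy_pm1 P (Bhat A k tau).

From HB Require Import structures.
From mathcomp Require Import all_boot all_order all_algebra.
From mathcomp Require Import all_classical all_reals all_analysis.
From mathcomp Require Import ring lra.
Set Implicit Arguments. Unset Strict Implicit. Unset Printing Implicit Defensive.
Import Order.TTheory GRing.Theory Num.Theory.
Import numFieldNormedType.Exports.
Local Open Scope classical_set_scope.
Local Open Scope ring_scope.

(* The entropy of [sign (S_k - tau)] is the binary entropy of [P (S_k < tau)],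
   which is maximal exactly when this probability is [1/2].
   Such a median threshold exists since [S_k] has no atoms: [S_k = t] pins
   [A_1] to a function of the other [A_j], and [A_1] has a bounded density and
   is independent of them.  Now [S_(k+1) < S_k] pointwise, so
   [tau_(k+1) >= tau_k] would leave no room for the event
   [S_(k+1) < tau_k <= S_k]; but this event contains a box of intervals for
   [A_1, ..., A_(k+1)] (small competitors, one large newcomer), which has
   positive Gaussian probability. *)

Section binary_entropy.
Context {R : realType}.

Definition binary_entropy (q : R) := - (plogp q + plogp (1 - q)).

Lemma binary_entropy_half : binary_entropy (1/2) = ln 2.
Proof.
rewrite /binary_entropy (_ : 1 - 1/2 = 1/2 :> R); last by field.
rewrite /plogp div1r invr_eq0 pnatr_eq0 /= lnV ?posrE //.
by field.
Qed.

(* The right-hand side is the tangent of [- x ln x] at [x = 1/2]. *)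
Lemma neg_mul_ln_lt_tangent_half (r : R) : 0 < r -> r != 1/2 ->
  - (r * ln r) < r * (ln 2 - 1) + 1/2.
Proof.
move=> r0 rh; set y := (2 * r)^-1.
have y0 : 0 < y by rewrite invr_gt0 mulr_gt0.
have ln_y : ln y = - (ln 2 + ln r) by rewrite lnV ?posrE ?mulr_gt0 // lnM ?posrE.
have /expR_gt1Dx : ln y != 0.
  apply: contra rh; rewrite -ln1 => /eqP/ln_inj; rewrite ?posrE => /(_ y0 ltr01).
  by move=> /(congr1 GRing.inv); rewrite invrK invr1 => e; apply/eqP; lra.
rewrite lnK ?posrE // ln_y -(ltr_pM2l r0) => lt.
have -> : 1/2 = r * y by rewrite /y; field; rewrite gt_eqF.
lra.
Qed.

Lemma binary_entropy_lt_ln2 (q : R) : 0 <= q <= 1 -> q != 1/2 ->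
  binary_entropy q < ln 2.
Proof.
move=> /andP[q0 q1] qh; have ln2_gt0 : 0 < ln (2 : R) by rewrite ln_gt0 // ltr1n.
rewrite /binary_entropy /plogp.
have [->|qn0] := eqVneq q 0; first by rewrite subr0 oner_eq0 ln1 mulr0 add0r oppr0.
have [->|qn1] := eqVneq q 1; first by rewrite subrr eqxx ln1 mulr0 addr0 oppr0.
rewrite subr_eq0 eq_sym (negbTE qn1).
have := @neg_mul_ln_lt_tangent_half q; rewrite lt_neqAle eq_sym qn0 q0 => /(_ isT qh).
have := @neg_mul_ln_lt_tangent_half (1 - q).
rewrite subr_gt0 lt_neqAle qn1 q1 => /(_ isT); have -> : 1 - q != 1/2.
  by apply: contra qh => /eqP e; apply/eqP; lra.
move=> /(_ isT); lra.
Qed.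

End binary_entropy.

Section normal_prob_itv.
Local Open Scope ereal_scope.
Context {R : realType} (m s : R).
Hypothesis s_gt0 : (0 < s)%R.

Lemma normal_prob_itv_le (a b : R) : (a <= b)%R ->
  normal_prob m s `[a, b] <= (normal_peak s * (b - a))%:E.
Proof.
move=> ab; apply: (@le_trans _ _
  (\int[lebesgue_measure]_(x in `[a, b]) (normal_peak s)%:E)).
  apply: ge0_le_integral => //=.
  - by move=> x _; rewrite lee_fin normal_pdf_ge0.
  - apply/measurable_realfun.measurable_EFinP.
    exact: measurable_funTS (measurable_normal_pdf m s).
  - by move=> x _; rewrite lee_fin normal_pdf_ub // gt_eqF.
rewrite integral_cst //= lebesgue_measure_itv /= lte_fin.
have [_|ba] := ltrP a b; first by rewrite -EFinD -EFinM.
have -> : b = a by apply/eqP; rewrite eq_le ba ab.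
by rewrite subrr mulr0 mule0.
Qed.

(* On [`[a, b[] the density is at least its value at distance
   [|a - m| + |b - m|] from the mean. *)
Lemma normal_prob_itv_gt0 (a b : R) : (a < b)%R -> 0 < normal_prob m s `[a, b[.
Proof.
move=> ab; pose K := (`|a - m| + `|b - m|)%R.
pose c := (normal_peak s * expR (- K ^+ 2 / (s ^+ 2 *+ 2)))%R.
have c_gt0 : (0 < c)%R by rewrite mulr_gt0 ?expR_gt0 ?normal_peak_gt0 ?gt_eqF.
apply: (@lt_le_trans _ _ (\int[lebesgue_measure]_(x in `[a, b[) c%:E)).
  rewrite integral_cst //= lebesgue_measure_itv /= lte_fin ab -EFinD -EFinM.
  by rewrite lte_fin mulr_gt0 // subr_gt0.
apply: ge0_le_integral => //=.
- by move=> x _; rewrite lee_fin ltW.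
- apply/measurable_realfun.measurable_EFinP.
  exact: measurable_funTS (measurable_normal_pdf m s).
move=> x; rewrite in_itv /= => /andP[ax xb].
rewrite lee_fin normal_pdfE ?gt_eqF //= ler_wpM2l ?normal_peak_ge0 // ler_expR.
rewrite !mulNr lerN2 ler_pM2r ?invr_gt0 ?pmulrn_lgt0 ?exprn_gt0 //.
have xK : (`|x - m| <= K)%R.
  have := ler_norm (b - m)%R; have := ler_norm (m - a)%R; rewrite distrC.
  have := normr_ge0 (a - m)%R; have := normr_ge0 (b - m)%R.
  by rewrite ler_norml /K; lra.
by rewrite -real_normK ?num_real // lerXn2r ?nnegrE // (le_trans _ xK).
Qed.

End normal_prob_itv.

Section grid.
Context {R : realType} (delta : R).
Hypothesis delta_gt0 : 0 < delta.

(* The cells [[z delta, (z + 1) delta[] for [z : int], indexed by [nat] through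
   the countable type [int]; indices that encode no integer give empty cells. *)
Definition grid_cell (m : nat) : set R :=
  if pickle_inv m is Some z then [set x | Num.floor (x / delta) = z] else set0.

Lemma grid_cellE m z : pickle_inv m = Some z ->
  grid_cell m = [set` `[z%:~R * delta, (z + 1)%:~R * delta[].
Proof.
rewrite /grid_cell => ->; apply/seteqP; split => x /=; rewrite in_itv /=.
  by move=> <-; rewrite -ler_pdivlMr // -ltr_pdivrMr // floor_itv.
by move=> /andP[le lt]; apply/eqP; rewrite floor_eq ler_pdivlMr // ltr_pdivrMr // le.
Qed.

Lemma measurable_grid_cell m : measurable (grid_cell m).
Proof.
case E: (@pickle_inv int m) => [z|]; last by rewrite /grid_cell E.
by rewrite (grid_cellE E); exact: measurable_itv.
Qed.

Lemma trivIset_grid_cell : trivIset setT grid_cell.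
Proof.
move=> i j _ _ [x []]; rewrite /grid_cell.
case Ei: (@pickle_inv int i) => [zi|] //; case Ej: (@pickle_inv int j) => [zj|] //=.
move=> ei ej; have := @pickle_invK int i; have := @pickle_invK int j.
by rewrite Ei Ej /= => <- <-; rewrite -ei -ej.
Qed.

Lemma bigcup_grid_cell : \bigcup_m grid_cell m = setT.
Proof.
apply/seteqP; split => // x _.
by exists (pickle (Num.floor (x / delta))) => [//|]; rewrite /grid_cell pickleK_inv.
Qed.

Lemma grid_cell_sub_itv m : exists a, grid_cell m `<=` `[a, a + delta].
Proof.
case E: (@pickle_inv int m) => [z|]; last by exists 0; rewrite /grid_cell E.
exists (z%:~R * delta); rewrite (grid_cellE E) => x /=; rewrite !in_itv /=.
by rewrite intrD mulrDl mul1r => /andP[-> /ltW].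
Qed.

End grid.

Section real_probability.
Context d (T : measurableType d) (R : realType) (P : probability T R).

Definition pr (E : set T) : R := fine (P E).

Lemma prE E : measurable E -> P E = (pr E)%:E.
Proof.
move=> mE; rewrite /pr fineK // ge0_fin_numE ?measure_ge0 //.
by rewrite (le_lt_trans (probability_le1 P mE)) // ltry.
Qed.

Lemma pr_ge0 E : 0 <= pr E.
Proof. by rewrite /pr fine_ge0 ?measure_ge0. Qed.

Lemma pr_le1 E : measurable E -> pr E <= 1.
Proof. by move=> mE; have := probability_le1 P mE; rewrite prE // lee_fin. Qed.

Lemma pr_setC E : measurable E -> pr (~` E) = 1 - pr E.
Proof.
move=> mE; apply: EFin_inj; rewrite EFinB -!prE ?probability_setC //.
exact: measurableC.
Qed.

Lemma le_pr E F : measurable E -> measurable F -> E `<=` F -> pr E <= pr F.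
Proof. by move=> mE mF EF; rewrite -lee_fin -!prE // le_measure ?inE. Qed.

Lemma pr_setU E F : measurable E -> measurable F -> E `&` F = set0 ->
  pr (E `|` F) = pr E + pr F.
Proof.
move=> mE mF EF0; apply: EFin_inj.
by rewrite EFinD -!prE ?measureU //; exact: measurableU.
Qed.

Section real_random_variable.
Variable X : T -> R.
Hypothesis mX : measurable_fun setT X.

Lemma measurable_preimage (B : set R) : measurable B -> measurable (X @^-1` B).
Proof. by move=> mB; rewrite -[_ @^-1` _]setTI; exact: mX. Qed.

Lemma pr_lt_le_of_lt (t c : R) :
  (forall s, s < t -> pr (X @^-1` `]-oo, s[) <= c) -> pr (X @^-1` `]-oo, t[) <= c.
Proof.
move=> le_c; pose F m := X @^-1` `]-oo, t - m.+1%:R^-1[.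
have mF m : measurable (F m) by exact: measurable_preimage.
have FU : \bigcup_m F m = X @^-1` `]-oo, t[.
  apply/seteqP; split => x /=; rewrite in_itv /=.
    by move=> [m _]; rewrite /F /= in_itv /= => /lt_le_trans; apply; rewrite gerBl.
  move=> /ltr_add_invr[m lt]; exists m => //.
  by rewrite /F /= in_itv /= ltrBrDr.
have ndF : nondecreasing_seq F.
  move=> i j ij; apply/subsetPset => x; rewrite /F /= !in_itv /= => /lt_le_trans; apply.
  by rewrite lerB // lef_pV2 ?posrE // ler_nat.
have mU := bigcupT_measurable _ mF.
have cvgF := @nondecreasing_cvg_mu _ _ _ P F mF mU ndF.
rewrite -FU -lee_fin -prE // -(cvg_lim _ cvgF) //.
apply: lime_le; first by apply/cvg_ex; eexists; exact: cvgF.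
apply: nearW => m /=; rewrite prE // lee_fin le_c //.
by rewrite gtrBl invr_gt0.
Qed.

Lemma pr_le_ge_of_gt (t c : R) :
  (forall s, t < s -> c <= pr (X @^-1` `]-oo, s[)) -> c <= pr (X @^-1` `]-oo, t]).
Proof.
move=> ge_c; pose F m := X @^-1` `]-oo, t + m.+1%:R^-1[.
have mF m : measurable (F m) by exact: measurable_preimage.
have FI : \bigcap_m F m = X @^-1` `]-oo, t].
  apply/seteqP; split => x /=; rewrite in_itv /=; last first.
    by move=> le m _; rewrite /F /= in_itv /= (le_lt_trans le) // ltrDl.
  move=> lt; rewrite leNgt; apply/negP => /ltr_add_invr[m].
  by have := lt m I; rewrite /F /= in_itv /= => /lt_trans/[apply]; rewrite ltxx.
have niF : nonincreasing_seq F.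
  move=> i j ij; apply/subsetPset => x; rewrite /F /= !in_itv /= => /lt_le_trans; apply.
  by rewrite lerD2l lef_pV2 ?posrE // ler_nat.
have F0 : (P (F 0%N) < +oo)%E by rewrite prE // ltry.
have mI := bigcapT_measurable mF.
have cvgF := @nonincreasing_cvg_mu _ _ _ P F F0 mF mI niF.
rewrite -FI -lee_fin -prE // -(cvg_lim _ cvgF) //.
apply: lime_ge; first by apply/cvg_ex; eexists; exact: cvgF.
apply: nearW => m /=; rewrite prE // lee_fin ge_c //.
by rewrite ltrDl invr_gt0.
Qed.

(* [t] is the supremum of the levels [s] with [pr (X < s) <= c]. *)
Lemma atomless_pr_lt_ivt (a b c : R) :
  (forall t, P (X @^-1` [set t]) = 0) -> pr (X @^-1` `]-oo, a[) <= c ->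
  c < pr (X @^-1` `]-oo, b[) -> exists t, pr (X @^-1` `]-oo, t[) = c.
Proof.
move=> atomless le_a lt_b; pose Q := [set s | pr (X @^-1` `]-oo, s[) <= c].
have mlt s : measurable (X @^-1` `]-oo, s[) by exact: measurable_preimage.
have mono s s' : s <= s' -> pr (X @^-1` `]-oo, s[) <= pr (X @^-1` `]-oo, s'[).
  move=> ss'; apply: le_pr => // x /=; rewrite !in_itv /= => /lt_le_trans; exact.
have supQ : has_sup Q.
  split; first by exists a.
  exists b => s Qs; rewrite leNgt; apply/negP => /ltW/mono; move: Qs; rewrite /Q /=.
  lra.
exists (sup Q); apply/eqP; rewrite eq_le; apply/andP; split.
  apply: pr_lt_le_of_lt => s lts.
  have [|q Qq ltq] := @sup_adherent _ Q (sup Q - s) _ supQ; first by rewrite subr_gt0.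
  by apply: le_trans Qq; apply: mono; lra.
have sup_atom : X @^-1` `]-oo, sup Q] = X @^-1` `]-oo, sup Q[ `|` X @^-1` [set sup Q].
  apply/seteqP; split => x /=; rewrite !in_itv /=.
    by rewrite le_eqVlt => /orP[/eqP ->|->]; [right|left].
  by move=> [/ltW|->].
have m_atom : measurable (X @^-1` [set sup Q]) by exact: measurable_preimage.
have := @pr_le_ge_of_gt (sup Q) c; rewrite sup_atom pr_setU //.
- rewrite /pr atomless addr0; apply => s lt_s; rewrite leNgt; apply/negP => lts.
  by have := sup_upper_bound supQ (ltW lts : Q s); rewrite leNgt lt_s.
- by apply/seteqP; split => x //= []; rewrite in_itv /= => + eq; rewrite eq ltxx.
Qed.

End real_random_variable.

Lemma measurable_eq_set (X V : T -> R) :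
  measurable_fun setT X -> measurable_fun setT V -> measurable [set x | X x = V x].
Proof.
move=> mX mV; rewrite (_ : [set x | _] = (fun x => X x - V x) @^-1` [set 0]).
  by apply: measurable_preimage => //; exact: measurable_realfun.measurable_funB.
by apply/seteqP; split => x /= => [->|/eqP]; rewrite ?subrr // subr_eq0 => /eqP.
Qed.

(* Cut the line into cells of length [delta]: by independence,
   [P (X = V) <= sum_m P (X in cell m) P (V in cell m) <= c delta]. *)
Lemma pr_eq_le_of_indep (X V : T -> R) (c delta : R) : 0 < delta ->
  measurable_fun setT X -> measurable_fun setT V ->
  (forall B C : set R, measurable B -> measurable C ->
    P (X @^-1` B `&` V @^-1` C) = (P (X @^-1` B) * P (V @^-1` C))%E) ->
  (forall a, P (X @^-1` `[a, (a + delta)%R]) <= (c * delta)%:E)%E ->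
  (P [set x | X x = V x] <= (c * delta)%:E)%E.
Proof.
move=> delta_gt0 mX mV indepXV le_X.
pose E m := X @^-1` grid_cell delta m `&` V @^-1` grid_cell delta m.
have mcell m := measurable_grid_cell delta_gt0 m.
have mE m : measurable (E m).
  by apply: measurableI; apply: measurable_preimage.
have m_eq := measurable_eq_set mX mV.
have sub : [set x | X x = V x] `<=` \bigcup_m E m.
  move=> x /= eq; have : (\bigcup_m grid_cell delta m) (X x).
    by rewrite bigcup_grid_cell.
  by case=> m _ cell; exists m => //; split; rewrite /= -?eq.
apply: le_trans (measure_sigma_subadditive P mE m_eq sub) _.
apply: le_trans (@lee_nneseries _ _
  (fun m => (c * delta)%:E * P (V @^-1` grid_cell delta m))%E _ _ _ _) _.
- by move=> i _ _; exact: measure_ge0.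
- move=> m _; apply: (@le_trans _ _
      (P (X @^-1` grid_cell delta m) * P (V @^-1` grid_cell delta m))%E).
    by have /eqP := indepXV _ _ (mcell m) (mcell m); rewrite eq_le => /andP[].
  apply: lee_wpmul2r; first exact: measure_ge0.
  have [a sub_a] := grid_cell_sub_itv delta_gt0 m.
  apply: le_trans (le_X a); apply: le_measure; rewrite ?inE.
  + exact: measurable_preimage.
  + exact: (measurable_preimage mX (measurable_itv _)).
  + by move=> x /sub_a.
rewrite nneseriesZl; last by move=> i _; exact: measure_ge0.
have -> : (\sum_(0 <= m <oo) P (V @^-1` grid_cell delta m) = 1)%E.
  rewrite -(probability_setT P) -(preimage_setT V) -(bigcup_grid_cell delta).
  rewrite preimage_bigcup measure_bigcup.
  - by congr (limn _); apply: funext => n; apply: eq_bigl => i; rewrite in_setT.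
  - by move=> i _; exact: measurable_preimage.
  - move=> i j _ _ [x [ci cj]]; apply: (trivIset_grid_cell (delta := delta)) => //.
    by exists (V x).
by rewrite mule1.
Qed.

Lemma pr_eq0_of_indep (X V : T -> R) (c : R) :
  measurable_fun setT X -> measurable_fun setT V ->
  (forall B C : set R, measurable B -> measurable C ->
    P (X @^-1` B `&` V @^-1` C) = (P (X @^-1` B) * P (V @^-1` C))%E) ->
  (forall a delta, (0 < delta)%R ->
    P (X @^-1` `[a, (a + delta)%R]) <= (c * delta)%:E)%E ->
  P [set x | X x = V x] = 0%E.
Proof.
move=> mX mV indepXV le_X.
have le_eq delta : 0 < delta -> (P [set x | X x = V x] <= (c * delta)%:E)%E.
  by move=> delta_gt0; apply: pr_eq_le_of_indep => // a; exact: le_X.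
have c_ge0 : 0 <= c.
  by have := le_eq 1 ltr01; rewrite mulr1 => /(le_trans (measure_ge0 _ _)).
apply/eqP; rewrite eq_le measure_ge0 andbT; apply/lee_addgt0Pr => e e_gt0.
rewrite add0e; apply: le_trans (le_eq (e / (c + 1)) _) _.
  by rewrite divr_gt0 // ltr_wpDl.
rewrite lee_fin mulrCA ger_pMr // ler_pdivrMr ?mul1r ?lerDl //.
by rewrite ltr_wpDl.
Qed.

(* For [tau <= tau'], the events [Y' >= tau'] (of mass [1 - c]) and
   [Y >= tau > Y'] would be disjoint parts of [Y >= tau] (also of mass
   [1 - c]). *)
Lemma quantile_lt_of_le (Y Y' : T -> R) (tau tau' c : R) :
  measurable_fun setT Y -> measurable_fun setT Y' -> (forall x, Y' x <= Y x) ->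
  pr (Y @^-1` `]-oo, tau[) = c -> pr (Y' @^-1` `]-oo, tau'[) = c ->
  0 < pr (Y @^-1` `[tau, +oo[ `&` Y' @^-1` `]-oo, tau[) -> tau' < tau.
Proof.
move=> mY mY' le_Y prY prY' pr_cross; rewrite ltNge; apply/negP => le_tau.
have pr_ge s (Z : T -> R) : measurable_fun setT Z ->
    pr (Z @^-1` `[s, +oo[) = 1 - pr (Z @^-1` `]-oo, s[).
  move=> mZ; have := measurable_preimage mZ (measurable_itv `]-oo, s[).
  by rewrite -setCitvl preimage_setC => /pr_setC.
have mG' := measurable_preimage mY' (measurable_itv `[tau', +oo[).
have mD := measurableI _ _ (measurable_preimage mY (measurable_itv `[tau, +oo[))
  (measurable_preimage mY' (measurable_itv `]-oo, tau[)).
set G' := Y' @^-1` `[tau', +oo[ in mG' *; set D := _ `&` _ in pr_cross mD.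
have disj : G' `&` D = set0.
  apply/seteqP; split => x // []; rewrite /G' /D /= !in_itv /= !andbT; lra.
have sub : G' `|` D `<=` Y @^-1` `[tau, +oo[.
  move=> x; rewrite /G' /D /= !in_itv /= !andbT; have := le_Y x.
  by move=> ? [|[]]; lra.
have := le_pr (measurableU _ _ mG' mD) (measurable_preimage mY (measurable_itv _)) sub.
by rewrite pr_setU // !pr_ge // prY prY'; lra.
Qed.

End real_probability.

Section gaussian_softmax.
Context d (T : measurableType d) (R : realType) (P : probability T R)
  (A : nat -> {RV P >-> R}) (mu sigma : R).
Hypothesis sigma_gt0 : 0 < sigma.
Hypothesis indepA : mutually_independent A.
Hypothesis normalA : forall (i : nat) (B : set R), measurable B ->
  distribution P (A i) B = normal_prob mu sigma B.

Local Notation S := (softmax1 A).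

Let sum_expR_gt0 n (f : nat -> R) : 0 < \sum_(j < n.+1) expR (f j).
Proof.
by rewrite big_ord_recl ltr_wpDr ?expR_gt0 // sumr_ge0 // => j _; rewrite expR_ge0.
Qed.

Definition tail_expsum n x := \sum_(j < n) expR (A j.+1 x).

Lemma measurable_A i : measurable_fun setT (A i).
Proof. exact: measurable_funPT. Qed.

Lemma measurable_A_preimage i (B : set R) : measurable B -> measurable (A i @^-1` B).
Proof. by move=> mB; rewrite -[_ @^-1` _]setTI; exact: measurable_A. Qed.

Lemma measurable_tail_expsum n : measurable_fun setT (tail_expsum n).
Proof.
apply: measurable_sum => j; apply: measurableT_comp => //; exact: measurable_A.
Qed.

Lemma tail_expsum_ge0 n x : 0 <= tail_expsum n x.
Proof. by rewrite sumr_ge0 // => j _; rewrite expR_ge0. Qed.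

Lemma tail_expsum_gt0 n x : 0 < tail_expsum n.+1 x.
Proof. exact: (sum_expR_gt0 n (fun j => A j.+1 x)). Qed.

Lemma softmax1E n x : S n.+1 x = expR (A 0 x) / (expR (A 0 x) + tail_expsum n x).
Proof. by rewrite /softmax1 big_ord_recl. Qed.

Lemma softmax1_gt0 n x : 0 < S n.+1 x.
Proof. by rewrite softmax1E divr_gt0 ?ltr_wpDr ?tail_expsum_ge0 ?expR_gt0. Qed.

Lemma softmax1_lt1 n x : S n.+2 x < 1.
Proof.
rewrite softmax1E ltr_pdivrMr ?ltr_wpDr ?tail_expsum_ge0 ?expR_gt0 //.
by rewrite mul1r ltrDl tail_expsum_gt0.
Qed.

Lemma softmax1S_lt n x : S n.+2 x < S n.+1 x.
Proof.
have tailS : tail_expsum n.+1 x = tail_expsum n x + expR (A n.+1 x).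
  by rewrite /tail_expsum big_ord_recr.
rewrite !softmax1E tailS ltr_pM2l ?expR_gt0 // addrA.
have := expR_gt0 (A 0 x); have := expR_gt0 (A n.+1 x); have := tail_expsum_ge0 n x.
by move=> ? ? ?; rewrite ltf_pV2 ?posrE; lra.
Qed.

Lemma measurable_softmax1 n : measurable_fun setT (S n.+1).
Proof.
rewrite (_ : S n.+1 = fun x => expR (A 0 x - ln (\sum_(j < n.+1) expR (A j x)))).
  apply: measurableT_comp => //; apply: measurable_realfun.measurable_funB.
    exact: measurable_A.
  apply: measurableT_comp => //; apply: measurable_sum => j.
  by apply: measurableT_comp => //; exact: measurable_A.
apply: funext => x; rewrite /softmax1 expRD expRN lnK //.
by rewrite posrE (sum_expR_gt0 n (fun j => A j x)).
Qed.

Definition tail_rectangles n : set (set T) := [set E | exists2 B : nat -> set R,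
  (forall i, measurable (B i)) &
  E = \bigcap_(i in [set j | j \in iota 1 n]) A i @^-1` B i].

Lemma tail_rectangles_measurable n : tail_rectangles n.+1 `<=` measurable.
Proof.
move=> _ [B mB ->]; apply: bigcap_measurable; first by exists 1%N; rewrite /= inE.
by move=> i _; exact: measurable_A_preimage.
Qed.

Lemma tail_rectanglesT n : tail_rectangles n setT.
Proof. by exists (fun=> setT) => //; apply/seteqP; split => x. Qed.

Lemma setI_closed_tail_rectangles n : setI_closed (tail_rectangles n).
Proof.
move=> _ _ [B mB ->] [C mC ->]; exists (fun i => B i `&` C i) => [i|].
  exact: measurableI.
apply/seteqP; split => x /=; first by move=> [BX CX] i si; split; [exact: BX|exact: CX].
by move=> BCx; split => i si; have [] := BCx i si.
Qed.

Lemma indep_A0_tail_rectangle n B0 E : measurable B0 -> tail_rectangles n E ->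
  P (A 0 @^-1` B0 `&` E) = (P (A 0 @^-1` B0) * P E)%E.
Proof.
move=> mB0 [B mB ->]; pose B' i := if i == 0%N then B0 else B i.
have mB' i : measurable (B' i) by rewrite /B'; case: ifP.
have B'E i : i \in iota 1 n -> B' i = B i by rewrite mem_iota /B'; case: i.
have := @indepA (0%N :: iota 1 n) B'; rewrite /= mem_iota ltnn iota_uniq big_cons.
move=> /(_ isT (fun i _ => mB' i)) prod_rule.
have prod_eq : (\prod_(i <- iota 1 n) P (A i @^-1` B' i) =
    \prod_(i <- iota 1 n) P (A i @^-1` B i))%E.
  by apply: eq_big_seq => i /B'E ->.
rewrite [B' 0%N]/B' eqxx prod_eq in prod_rule.
rewrite indepA ?iota_uniq // -prod_rule; congr (P _); apply/seteqP; split => x /=.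
  move=> [A0x ABx] i /=; rewrite in_cons => /orP[/eqP ->|si]; first by rewrite /B' eqxx.
  by rewrite B'E //; exact: ABx.
move=> ABx; split; first by have := ABx 0%N; rewrite /= in_cons eqxx /B' => /(_ isT).
by move=> i si; rewrite -B'E //; apply: ABx; rewrite /= in_cons si orbT.
Qed.

(* Both sides are finite measures in [E] that agree on the pi-system of
   rectangles, hence on the sigma-algebra it generates. *)
Lemma indep_A0_tail_sigma n B0 E : measurable B0 -> <<s tail_rectangles n.+1 >> E ->
  P (A 0 @^-1` B0 `&` E) = (P (A 0 @^-1` B0) * P E)%E.
Proof.
move=> mB0 sE; have mA0 := measurable_A_preimage 0 mB0.
pose r : {nonneg R} := NngNum (pr_ge0 P (A 0 @^-1` B0)).
have cover : \bigcup_(k : nat) (fun=> @setT T) k = setT.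
  by apply/seteqP; split => // x _; exists 0%N.
have eq_rect F : tail_rectangles n.+1 F -> mrestr P mA0 F = mscale r P F.
  by move=> rF; rewrite /mrestr /mscale /= setIC (indep_A0_tail_rectangle mB0 rF) prE.
have fin (k : nat) : (mrestr P mA0 ((fun=> setT) k) < +oo)%E.
  by rewrite /mrestr setTI (le_lt_trans (probability_le1 P mA0)) // ltry.
have := @g_sigma_algebra_measure_unique _ _ _ _ (@tail_rectangles_measurable n)
  (fun=> setT) (fun _ => tail_rectanglesT _) cover (mrestr P mA0) (mscale r P)
  (@setI_closed_tail_rectangles _) eq_rect fin E sE.
move=> restrE; rewrite setIC; transitivity (mrestr P mA0 E) => //.
by rewrite restrE [in RHS](prE P mA0).
Qed.

Lemma measurable_A_tail_sigma n j : (0 < j <= n)%N ->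
  measurable_fun (setT : set (g_sigma_algebraType (tail_rectangles n))) (A j).
Proof.
move=> /andP[j_gt0 j_le] _ Y mY; apply: sub_sigma_algebra.
exists (fun i => if i == j then Y else setT) => [i|]; first by case: ifP.
apply/seteqP; split => x /=; first by move=> [_ Yx] i _; case: ifP => // /eqP ->.
move=> Yx; split => //; have := Yx j; rewrite /= mem_iota eqxx j_gt0 add1n ltnS j_le.
exact.
Qed.

Lemma indep_A0_tail_expsum n (f : R -> R) : measurable_fun setT f ->
  forall B C : set R, measurable B -> measurable C ->
  P (A 0 @^-1` B `&` (f \o tail_expsum n.+1) @^-1` C) =
  (P (A 0 @^-1` B) * P ((f \o tail_expsum n.+1) @^-1` C))%E.
Proof.
move=> mf B C mB mC; apply: (indep_A0_tail_sigma (n := n)) => //.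
have mfU : measurable_fun (setT : set (g_sigma_algebraType (tail_rectangles n.+1)))
    (f \o tail_expsum n.+1).
  apply: measurableT_comp => //; apply: measurable_sum => j.
  by apply: measurableT_comp => //; apply: measurable_A_tail_sigma; rewrite ltn_ord.
by have := mfU measurableT C mC; rewrite setTI.
Qed.

Lemma measurable_softmax1_preimage n (B : set R) : measurable B ->
  measurable (S n.+1 @^-1` B).
Proof. by move=> mB; rewrite -[_ @^-1` _]setTI; exact: measurable_softmax1. Qed.

(* [S = t] forces [A_0 = ln (t / (1 - t) * tail_expsum)], an event of
   probability zero because [A_0] has a bounded density and is independent of
   the tail. *)
Lemma softmax1_atomless n t : P (S n.+2 @^-1` [set t]) = 0%E.
Proof.
have [t_le0|t_gt0] := lerP t 0.
  rewrite (_ : _ @^-1` _ = set0) ?measure0 //; apply/seteqP; split => x //= St.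
  by have := softmax1_gt0 n.+1 x; rewrite St ltNge t_le0.
have [t_ge1|t_lt1] := lerP 1 t.
  rewrite (_ : _ @^-1` _ = set0) ?measure0 //; apply/seteqP; split => x //= St.
  by have := softmax1_lt1 n x; rewrite St ltNge t_ge1.
pose f u := ln (t / (1 - t) * u); pose V := f \o tail_expsum n.+1.
have mf : measurable_fun setT f.
  by apply: measurableT_comp => //; exact: measurable_realfun.measurable_funM.
have sub : S n.+2 @^-1` [set t] `<=` [set x | A 0 x = V x].
  move=> x /=; rewrite softmax1E => St; rewrite /V /f /= -[LHS]expRK; congr ln.
  have := tail_expsum_ge0 n.+1 x; have := expR_gt0 (A 0 x); move: St.
  set e := expR _; set u := tail_expsum _ _ => St e_gt0 u_ge0.
  have e_eq : e = t * (e + u) by rewrite -St divfK // gt_eqF // ltr_wpDr.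
  have t1_neq0 : 1 - t != 0 by rewrite subr_eq0 gt_eqF.
  apply: (mulIf t1_neq0); rewrite mulrAC divfK // mulrBr mulr1 [X in X - _]e_eq.
  ring.
apply/eqP; rewrite eq_le measure_ge0 andbT.
rewrite -(@pr_eq0_of_indep _ _ _ P (A 0) V (normal_peak sigma)).
- apply: le_measure; rewrite ?inE //; first exact: measurable_softmax1_preimage.
  apply: measurable_eq_set; first exact: measurable_A.
  by apply: measurableT_comp => //; exact: measurable_tail_expsum.
- exact: measurable_A.
- by apply: measurableT_comp => //; exact: measurable_tail_expsum.
- exact: indep_A0_tail_expsum.
- move=> a delta delta_gt0; have := normalA 0 (measurable_itv `[a, a + delta]).
  rewrite /distribution /pushforward /= => ->.
  have := normal_prob_itv_le mu sigma_gt0 (ler_wpDr (ltW delta_gt0) (lexx a)).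
  by rewrite addrAC subrr add0r.
Qed.

Lemma softmax1_median n : exists t, pr P (S n.+2 @^-1` `]-oo, t[) = 1/2.
Proof.
apply: (@atomless_pr_lt_ivt _ _ _ _ _ (measurable_softmax1 n.+1) 0 1).
- exact: softmax1_atomless.
- rewrite (_ : S n.+2 @^-1` `]-oo, 0[ = set0); first by rewrite /pr measure0 /=; lra.
  apply/seteqP; split => x //=; rewrite in_itv /= => lt0.
  by have := softmax1_gt0 n.+1 x; rewrite ltNge (ltW lt0).
- rewrite (_ : S n.+2 @^-1` `]-oo, 1[ = setT).
    by rewrite /pr probability_setT /=; lra.
  by apply/seteqP; split => x //= _; rewrite in_itv /= softmax1_lt1.
Qed.

Lemma entropy_Bhat n t :
  entropy_pm1 P (Bhat A n.+1 t) = binary_entropy (pr P (S n.+1 @^-1` `]-oo, t[)).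
Proof.
have mlt := measurable_softmax1_preimage n (measurable_itv `]-oo, t[).
rewrite /entropy_pm1 big_cons big_cons big_nil addr0 /binary_entropy -pr_setC //.
congr (- (plogp (fine (P _)) + plogp (fine (P _)))); apply/seteqP; split => x;
  by rewrite /Bhat /sgn /= in_itv /= subr_ge0; case: leP => // h e; lra.
Qed.

Lemma entropy_max_threshold_median n tau : entropy_max_threshold A n.+2 tau ->
  pr P (S n.+2 @^-1` `]-oo, tau[) = 1/2.
Proof.
move=> tau_max; have [t median_t] := softmax1_median n.
have := tau_max t; rewrite !entropy_Bhat median_t binary_entropy_half.
apply: contraTeq => /binary_entropy_lt_ln2; rewrite -ltNge; apply.
by rewrite pr_ge0 pr_le1 //; exact: measurable_softmax1_preimage.
Qed.

Lemma softmax1_median_itv n tau : pr P (S n.+2 @^-1` `]-oo, tau[) = 1/2 ->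
  0 < tau < 1.
Proof.
move=> median_tau; apply/andP; split; rewrite ltNge; apply/negP => tau_out.
  move: median_tau; rewrite (_ : S n.+2 @^-1` `]-oo, tau[ = set0).
    by rewrite /pr measure0 /=; lra.
  apply/seteqP; split => x //=; rewrite in_itv /= => lt_tau.
  by have := softmax1_gt0 n.+1 x; rewrite ltNge (le_trans (ltW lt_tau)).
move: median_tau; rewrite (_ : S n.+2 @^-1` `]-oo, tau[ = setT).
  by rewrite /pr probability_setT /=; lra.
apply/seteqP; split => x //= _; rewrite in_itv /=.
exact: lt_le_trans (softmax1_lt1 n x) tau_out.
Qed.

(* The competitors [A_1, ..., A_(n+1)] are small enough that [S_(n+2) >= tau],
   while the newcomer [A_(n+2)] is large enough that [S_(n+3) < tau]. *)
Lemma softmax1_cross n tau x : 0 < tau < 1 -> 0 <= A 0 x < 1 ->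
  (forall j, (0 < j <= n.+1)%N -> A j x < ln ((1 - tau) / (n.+1%:R * tau))) ->
  2 - ln tau <= A n.+2 x ->
  tau <= S n.+2 x /\ S n.+3 x < tau.
Proof.
move=> /andP[tau_gt0 tau_lt1] /andP[A0_ge0 A0_lt1] small large.
have e0_ge1 : 1 <= expR (A 0 x) by rewrite -expR0 ler_expR.
have e0_lte : expR (A 0 x) < expR 1 by rewrite ltr_expR.
have n_gt0 : 0 < n.+1%:R :> R by rewrite ltr0n.
have U_le : tau * tail_expsum n.+1 x <= 1 - tau.
  set c := (1 - tau) / (n.+1%:R * tau).
  have c_gt0 : 0 < c by rewrite divr_gt0 ?mulr_gt0 ?subr_gt0.
  have : tail_expsum n.+1 x <= \sum_(j < n.+1) c.
    apply: ler_sum => j _; rewrite -[c]lnK ?posrE // ler_expR ltW //.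
    by apply: small; rewrite /= ltn_ord.
  rewrite sumr_const card_ord -mulr_natl => tail_le.
  have -> : 1 - tau = tau * (n.+1%:R * c).
    by rewrite /c; field; rewrite gt_eqF //= addrC natr1 pnatr_eq0.
  by rewrite ler_pM2l.
have tailS : tail_expsum n.+2 x = tail_expsum n.+1 x + expR (A n.+2 x).
  by rewrite /tail_expsum big_ord_recr.
have large_e : expR 2 <= tau * expR (A n.+2 x).
  have : expR (2 - ln tau) <= expR (A n.+2 x) by rewrite ler_expR.
  rewrite expRD expRN lnK ?posrE // => /(ler_wpM2l (ltW tau_gt0)).
  apply: le_trans.
  by rewrite mulrCA divff ?gt_eqF // mulr1.
have e1_lt_e2 : expR 1 < expR 2 :> R by rewrite ltr_expR ltr1n.
have U_ge0 := tail_expsum_ge0 n.+1 x; have e0_gt0 := expR_gt0 (A 0 x).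
have eN_gt0 := expR_gt0 (A n.+2 x).
rewrite !softmax1E tailS ler_pdivlMr ?ltr_pdivrMr; try lra.
have : 1 - tau <= (1 - tau) * expR (A 0 x) by rewrite ler_peMr // subr_ge0 ltW.
have : 0 <= tau * tail_expsum n.+1 x by rewrite mulr_ge0 // ltW.
have : 0 <= tau * expR (A 0 x) by rewrite mulr_ge0 // ltW.
split; lra.
Qed.

Lemma pr_rectangle_gt0 n (a b : nat -> R) : (forall i, a i < b i) ->
  0 < pr P (\bigcap_(i in [set j | j \in iota 0 n.+1]) A i @^-1` `[a i, b i[).
Proof.
move=> ab; have mrect i : measurable (A i @^-1` `[a i, b i[).
  exact: measurable_A_preimage.
rewrite -lte_fin -prE; last by apply: bigcap_measurable => [|i _ //]; exists 0%N.
rewrite (@indepA (iota 0 n.+1) (fun i => [set` `[a i, b i[])) ?iota_uniq //.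
rewrite (eq_bigr (fun i => (pr P (A i @^-1` `[a i, b i[))%:E)); last first.
  by move=> i _; rewrite prE.
rewrite prodEFin lte_fin; apply: prodr_gt0 => i _.
rewrite -lte_fin -prE //; have := normalA i (measurable_itv `[a i, b i[).
by rewrite /distribution /pushforward /= => ->; exact: normal_prob_itv_gt0.
Qed.

Lemma pr_softmax1_cross_gt0 n tau : 0 < tau < 1 ->
  0 < pr P (S n.+2 @^-1` `[tau, +oo[ `&` S n.+3 @^-1` `]-oo, tau[).
Proof.
move=> tau01; pose M := ln ((1 - tau) / (n.+1%:R * tau)).
pose a i := if i == 0%N then 0 else if i == n.+2 then 2 - ln tau else M - 1.
have mcross : measurable (S n.+2 @^-1` `[tau, +oo[ `&` S n.+3 @^-1` `]-oo, tau[).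
  by apply: measurableI; exact: measurable_softmax1_preimage.
have a_lt i : a i < a i + 1 by rewrite ltrDl.
apply: lt_le_trans (pr_rectangle_gt0 n.+2 a_lt) _.
apply: le_pr => //.
  by apply: bigcap_measurable => [|i _]; [exists 0%N|exact: measurable_A_preimage].
move=> x rect; have inR i : (i <= n.+2)%N -> a i <= A i x < a i + 1.
  move=> le_i; have : A i x \in `[a i, a i + 1[.
    by apply: rect; change (i \in iota 0 n.+3); rewrite mem_iota add0n ltnS.
  by rewrite in_itv.
have [S2_ge S3_lt] : tau <= S n.+2 x /\ S n.+3 x < tau.
  apply: softmax1_cross => //.
  - by have := inR 0%N isT; rewrite /a eqxx add0r.
  - move=> j /andP[j_gt0 j_le]; have := inR j (leqW j_le).
    by rewrite /a gtn_eqF // ltn_eqF ?ltnS //= subrK => /andP[_].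
  - by have := inR n.+2 (leqnn _); rewrite /a /= eqxx => /andP[large _].
by split; rewrite /= in_itv /= ?S2_ge ?S3_lt.
Qed.

End gaussian_softmax.

Theorem theorem1 (d : measure_display) (T : measurableType d) (R : realType)
  (P : probability T R) (A : nat -> {RV P >-> R}) (mu sigma : R) :
  0 < sigma ->
  mutually_independent A ->
  (forall (i : nat) (B : set R), measurable B ->
     distribution P (A i) B = normal_prob mu sigma B) ->
  forall (k : nat), (2 <= k)%N ->
  forall tauk tauk1 : R,
    entropy_max_threshold A k tauk ->
    entropy_max_threshold A k.+1 tauk1 ->
    tauk1 < tauk.
Proof.
move=> sigma_gt0 indepA normalA [|[|n]] // _ tau tau' tau_max tau'_max.
have median := entropy_max_threshold_median sigma_gt0 indepA normalA tau_max.
have median' := entropy_max_threshold_median sigma_gt0 indepA normalA tau'_max.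
apply: (quantile_lt_of_le (measurable_softmax1 A n.+1) (measurable_softmax1 A n.+2)
  _ median median'); first by move=> x; exact/ltW/softmax1S_lt.
have tau_itv := softmax1_median_itv median.
exact (pr_softmax1_cross_gt0 sigma_gt0 indepA normalA n tau_itv).
Qed.
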